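(* Let $G=(V,E)$ be an unweighted graph with $n$ vertices and let $k\geq 2$ be an integer. Run the clustering defined in the context with $r=k-1$ and $p=1-n^{-1/k}$. Then there exists a set of edges $F\subseteq E$, determined by the sampled values, such that for every outcome and every edge $(x,y)\in E$, one of its endpoints has an edge from $F$ into the cluster of the other endpoint (i.e., either $(x,y')\in F$ for some $y'$ with $c_{y'}=c_y$, or $(x',y)\in F$ for some $x'$ with $c_{x'}=c_x$), and $\mathbb{E}[|F|]=O(n^{1+1/k})$.
   Context: Setting (the clustering): $G=(V,E)$ is a graph (here unweighted, i.e., all edge weights $1$) with shortest-path distance $d_G$, and each vertex has a distinct identifier $\mathrm{ID}(v)$. Let $p\in(0,1)$ and $r\in\mathbb{N}$. Let $\mathrm{GeomCap}(p,r)$ be the distribution on $\{0,\dots,r\}$ with $\Pr[=i]=p(1-p)^i$ for $0\leq i\leq r-1$ and $\Pr[=r]=(1-p)^r$. Each vertex $v$ independently samples $\delta_v\sim\mathrm{GeomCap}(p,r)$. For $u,x\in V$ define $d^{(u)}(s,x):=r-\delta_u+d_G(u,x)$ and the level $d_{G'}(s,x):=\min_{u\in V} d^{(u)}(s,x)$. The cluster center $c_x$ of $x$ is the vertex $u$ with smallest $\mathrm{ID}$ among those with $d^{(u)}(s,x)=d_{G'}(s,x)$; the cluster of a center $c$ is $\{x\in V: c_x=c\}$. *)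

From mathcomp Require Import all_boot.
From Stdlib Require Import Reals.
From mathcomp Require Import all_algebra Rstruct.

Set Implicit Arguments.
Unset Strict Implicit.
Unset Printing Implicit Defensive.

Section Clustering.
Variable V : finType.
Variable e : rel V.

Fixpoint ball (k : nat) (u : V) : {set V} :=
  match k with
  | 0 => [set u]
  | k'.+1 => ball k' u :|: [set y | [exists z in ball k' u, e z y]]
  end.

(* shortest-path distance d_G(u,x), meaningful when x is reachable from u
   (a shortest path then has fewer than #|V| edges). *)
Definition dist (u x : V) : nat :=
  find (fun i => x \in ball i u) (iota 0 #|V|).

(* d^{(u)}(s,x) = r - delta_u + d_G(u,x) (finite only when u reaches x) *)
Definition dcand (r : nat) (delta : V -> nat) (u x : V) : nat :=
  r - delta u + dist u x.

(* level d_{G'}(s,x) = min over u (with finite d_G(u,x)) of d^{(u)}(s,x);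
   the term u = x (value r - delta_x) is used as the seed. *)
Definition level (r : nat) (delta : V -> nat) (x : V) : nat :=
  \big[minn/(r - delta x)]_(u | connect e u x) dcand r delta u x.

Definition center (ID : V -> nat) (r : nat) (delta : V -> nat) (x : V) : V :=
  [arg min_(u < x | connect e u x && (dcand r delta u x == level r delta x)) ID u].

Definition edges : {set {set V}} :=
  [set [set xy.1; xy.2] | xy in [set xy : V * V | e xy.1 xy.2]].

End Clustering.

Definition geomcap (p : R) (r i : nat) : R :=
  if (i < r)%N then (p * (1 - p) ^ i)%R else ((1 - p) ^ r)%R.

(* probability of an outcome delta : V -> {0,...,k-1} (i.e. r = k-1),
   vertices sampled independently *)
Definition outcome_prob (V : finType) (p : R) (r : nat) (k : nat)
    (delta : {ffun V -> 'I_k}) : R :=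
  (\prod_(v : V) geomcap p r (delta v))%R.

(* Each vertex x keeps one edge into its own cluster and, for every other
   cluster c reached by an edge xy whose endpoint y comes before x in the order
   (level, ID of the centre), one edge into c; an edge between two clusters is
   then covered from its later endpoint.  If x is charged for c in this way,
   raising the shift of c alone makes c the centre of x.  Conditioning on the
   other shifts, the truncated geometric law of the shift of c (with
   q = 1 - p) gives Pr[x charged for c] <= Pr[c_x = c] / q + q^r, so
   E|F| <= n (1 + 1/q + n q^r), which is at most 3 n^(1+1/k) for q = n^(-1/k). *)

From Pilot Require Import Defs.
From mathcomp Require Import all_boot.
From Stdlib Require Import Reals.
From mathcomp Require Import all_order all_algebra Rstruct.
From mathcomp Require Import zify ring lra.

Set Implicit Arguments.
Unset Strict Implicit.
Unset Printing Implicit Defensive.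

Import Order.TTheory GRing.Theory Num.Theory.

Lemma arg_minn_default (I : finType) (i0 i1 : I) (P : pred I) (F : I -> nat) :
  P i1 -> [arg min_(i < i0 | P i) F i] = [arg min_(i < i1 | P i) F i].
Proof.
move=> Pi1; rewrite /arg_min /extremum; case: pickP => //= nomin.
case: (arg_minnP F Pi1) => i Pi imin; have /negP[] := nomin i.
by rewrite /= Pi; apply/forallP => j; apply/implyP/imin.
Qed.

Section Distance.
Variables (V : finType) (e : rel V).

Lemma mem_ballS i u y x : y \in ball e i u -> e y x -> x \in ball e i.+1 u.
Proof.
by move=> yi yx; rewrite /= !inE; apply/orP; right; apply/existsP; exists y; rewrite yi.
Qed.

Lemma dist_le_ball i u x : x \in ball e i u -> Defs.dist e u x <= i.
Proof.
move=> xi; rewrite /Defs.dist; case: (ltnP i #|V|) => [ltiV|leVi].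
  by rewrite leqNgt; apply/negP => /(before_find 0); rewrite nth_iota // add0n xi.
by apply: leq_trans (find_size _ _) _; rewrite size_iota.
Qed.

Lemma ball_dist u x : Defs.dist e u x < #|V| -> x \in ball e (Defs.dist e u x) u.
Proof.
move=> ltdV; have hasx : has (fun i => x \in ball e i u) (iota 0 #|V|).
  by rewrite has_find size_iota.
by have := nth_find 0 hasx; rewrite nth_iota // add0n.
Qed.

Lemma distxx x : Defs.dist e x x = 0.
Proof. by apply/eqP; rewrite -leqn0 dist_le_ball //= inE. Qed.

Lemma dist_edge u y x : e y x -> Defs.dist e u x <= (Defs.dist e u y).+1.
Proof.
move=> yx; case: (ltnP (Defs.dist e u y) #|V|) => [/ball_dist uy|leVy].
  exact/dist_le_ball/(mem_ballS uy yx).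
by apply: leq_trans (leqW leVy); rewrite /Defs.dist -[X in _ <= X](size_iota 0) find_size.
Qed.

End Distance.

Section Clusters.
Variables (V : finType) (e : rel V) (ID : V -> nat) (r : nat).

Section FixedShifts.
Variable d : V -> nat.
Local Notation level := (level e r d).
Local Notation center := (center e ID r d).
Local Notation dcand := (dcand e r d).

Lemma level_le u x : connect e u x -> level x <= dcand u x.
Proof. exact: (@bigmin_le_cond _ nat _ (r - d x) u (connect e ^~ x) (dcand ^~ x)). Qed.

Lemma level_attained x : exists2 u, connect e u x & level x = dcand u x.
Proof.
apply: (big_ind (fun m => exists2 u, connect e u x & m = dcand u x)).
- by exists x; rewrite ?connect0 // /Defs.dcand distxx addn0.
- by move=> _ _ [u1 ? ->] [u2 ? ->]; rewrite /minn; case: ltnP => _; [exists u1|exists u2].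
- by move=> u; exists u.
Qed.

Lemma center_spec x :
  [/\ connect e (center x) x, dcand (center x) x = level x &
      forall u, connect e u x -> dcand u x = level x -> ID (center x) <= ID u].
Proof.
have [u0 cu0 du0] := level_attained x.
(* The default [x] of the arg min defining [center] need not attain the level. *)
have Pu0 : connect e u0 x && (dcand u0 x == level x) by rewrite cu0 du0 eqxx.
rewrite /Defs.center (@arg_minn_default _ _ u0) //.
case: arg_minnP => // u /andP[cu /eqP du] umin.
by split=> // v cv dv; apply: umin; rewrite cv dv eqxx.
Qed.

End FixedShifts.

Definition precedes (d : V -> nat) (y x : V) : bool :=
  (level e r d y < level e r d x) ||
  (level e r d y == level e r d x) && (ID (center e ID r d y) < ID (center e ID r d x)).

Definition charged (d : V -> nat) (x c : V) : bool :=
  (c != center e ID r d x) &&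
  [exists y, [&& e x y, center e ID r d y == c & precedes d y x]].

Hypothesis e_sym : symmetric e.

Lemma charged_center_raise d d' x c :
  (forall v, v != c -> d' v = d v) -> d c < d' c <= r ->
  charged d x c -> center e ID r d' x = c.
Proof.
(* Raising the shift of c pulls d'^(c)(x) down to level_d(y) <= level_d(x), while every
   other candidate keeps its value >= level_d(x); ties go to c by the ID test in precedes. *)
move=> dd' /andP[ltc lecr] /andP[_ /existsP[y /and3P[xy /eqP yc prec]]].
have [cy dcy _] := center_spec d y; rewrite yc in cy dcy.
have yx : e y x by rewrite e_sym.
have cx : connect e c x := connect_trans cy (connect1 yx).
have le_cy : dcand e r d' c x <= level e r d y.
  by rewrite -dcy /Defs.dcand; have := dist_edge c yx; lia.
have le_yx : level e r d y <= level e r d x.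
  by case/orP: prec => [/ltnW //|/andP[/eqP -> _]].
have le_other w : w != c -> connect e w x -> level e r d x <= dcand e r d' w x.
  by move=> wc wx; rewrite /Defs.dcand dd' //; apply: level_le.
have lev' : level e r d' x = dcand e r d' c x.
  apply/eqP; rewrite eqn_leq level_le //=.
  have [u ux ->] := level_attained d' x.
  have [-> //|uc] := eqVneq u c.
  by apply: leq_trans le_cy (leq_trans le_yx (le_other u uc ux)).
have [cz dcz zmin'] := center_spec d' x.
set z := center e ID r d' x in cz dcz zmin' *.
apply/eqP/negPn/negP => zc.
have dzx : dcand e r d' z x = dcand e r d z x by rewrite /Defs.dcand dd'.
have le_xz := le_other z zc cz.
have [_ _ xmin] := center_spec d x.
have le_zc := zmin' c cx (esym lev').
have /xmin le_cz : dcand e r d z x = level e r d x.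
  by apply/eqP; rewrite eqn_leq level_le //= -dzx dcz lev'; lia.
by move: prec; rewrite /precedes yc; lia.
Qed.

Hypothesis ID_inj : injective ID.

Lemma precedes_total d x y :
  center e ID r d x != center e ID r d y -> precedes d y x || precedes d x y.
Proof.
move=> cxy; have : ID (center e ID r d x) != ID (center e ID r d y).
  by apply: contra cxy => /eqP/ID_inj ->.
by rewrite /precedes; lia.
Qed.

Section Spanner.
Variable d : V -> nat.
Local Notation center := (center e ID r d).

Definition cluster_neighbor (x c : V) : option V := [pick y | e x y && (center y == c)].

Definition keeps_edge (x c : V) : bool := (c == center x) || charged d x c.

Definition spanner_pairs : {set V * V} :=
  [set xc | (cluster_neighbor xc.1 xc.2 != None) && keeps_edge xc.1 xc.2].

Definition spanner : {set {set V}} :=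
  [set [set xc.1; odflt xc.1 (cluster_neighbor xc.1 xc.2)] | xc in spanner_pairs].

Lemma spanner_sub_edges : spanner \subset edges e.
Proof.
apply/subsetP => _ /imsetP[[x c] /[!inE] /andP[+ _] ->] /=.
rewrite /cluster_neighbor; case: pickP => [y /andP[xy _] _|//].
by apply/imsetP; exists (x, y); rewrite ?inE.
Qed.

Lemma spanner_reaches_cluster x y :
  e x y -> keeps_edge x (center y) ->
  exists y', [set x; y'] \in spanner /\ center y' = center y.
Proof.
move=> xy kept; case def_y' : (cluster_neighbor x (center y)) => [y'|].
  have cy' : center y' = center y.
    by move: def_y'; rewrite /cluster_neighbor; case: pickP => // z /andP[_ /eqP cz] [<-].
  exists y'; split=> //; apply/imsetP; exists (x, center y); last by rewrite /= def_y'.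
  by rewrite inE /= def_y' kept.
by move: def_y'; rewrite /cluster_neighbor; case: pickP => // /(_ y); rewrite xy eqxx.
Qed.

Lemma spanner_cover x y : e x y ->
  (exists y', [set x; y'] \in spanner /\ center y' = center y) \/
  (exists x', [set x'; y] \in spanner /\ center x' = center x).
Proof.
move=> xy; have yx : e y x by rewrite e_sym.
have [cxy|cxy] := eqVneq (center x) (center y).
  by left; apply: spanner_reaches_cluster; rewrite /keeps_edge ?cxy ?eqxx.
have later_keeps u v : e u v -> center u != center v -> precedes d v u ->
    keeps_edge u (center v).
  move=> uv cuv pvu; apply/orP; right; rewrite /charged eq_sym cuv /=.
  by apply/existsP; exists v; rewrite uv eqxx.
case/orP: (precedes_total cxy) => [pyx|pxy].
  by left; apply/spanner_reaches_cluster/later_keeps.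
right; have cyx : center y != center x by rewrite eq_sym.
have [x' [yx' cx']] := spanner_reaches_cluster yx (later_keeps _ _ yx cyx pxy).
by exists x'; rewrite setUC.
Qed.

Lemma card_spanner : #|spanner| <= #|V| + \sum_x \sum_c charged d x c.
Proof.
apply: leq_trans (leq_imset_card _ _) _.
have -> : #|V| = \sum_x \sum_c (c == center x) :> nat.
  rewrite -sum1_card; apply: eq_bigr => x _.
  by rewrite (bigD1 (center x)) //= eqxx big1 // => c /negbTE ->.
have -> : #|spanner_pairs| = \sum_x \sum_c ((x, c) \in spanner_pairs) :> nat.
  by rewrite -sum1_card big_mkcond pair_bigA; apply: eq_bigr => -[x c] _; case: (_ \in _).
rewrite -big_split; apply: leq_sum => x _; rewrite -big_split; apply: leq_sum => c _.
by rewrite inE /keeps_edge; case: (_ != None) => //; case: (c == _); case: charged.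
Qed.

End Spanner.

End Clusters.

Local Open Scope ring_scope.

Section ProductWeights.
Variables (V I : finType) (w : I -> R).
Local Notation D := {ffun V -> I}.

Definition weight (dl : D) : R := \prod_v w (dl v).

Definition ffupd (dl : D) (c : V) (j : I) : D := [ffun v => if v == c then j else dl v].

Lemma ffupd_at dl c j : ffupd dl c j c = j.
Proof. by rewrite ffunE eqxx. Qed.

Lemma ffupdK dl c j j' : ffupd (ffupd dl c j) c j' = ffupd dl c j'.
Proof. by apply/ffunP => v; rewrite !ffunE; case: (v == c). Qed.

Lemma ffupd_id dl c : ffupd dl c (dl c) = dl.
Proof. by apply/ffunP => v; rewrite !ffunE; case: eqP => // ->. Qed.

Lemma weight_ffupd dl c j : weight (ffupd dl c j) = w j * \prod_(v | v != c) w (dl v).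
Proof.
rewrite /weight (bigD1 c) //= ffupd_at; congr (_ * _).
by apply: eq_bigr => v /negbTE vc; rewrite ffunE vc.
Qed.

Lemma sum_weight : \sum_dl weight dl = \prod_(v : V) \sum_j w j.
Proof. by rewrite bigA_distr_bigA. Qed.

Lemma sum_weight_fiber c j0 (h : D -> R) :
  \sum_dl weight dl * h dl =
  \sum_(dl : D | dl c == j0) (\prod_(v | v != c) w (dl v)) * \sum_j w j * h (ffupd dl c j).
Proof.
rewrite (partition_big (fun dl : D => dl c) xpredT) //=.
under [RHS]eq_bigr do rewrite mulr_sumr.
rewrite [RHS]exchange_big /=; apply: eq_bigr => j _.
rewrite (reindex_onto (fun dl => ffupd dl c j) (fun dl => ffupd dl c j0)); last first.
  by move=> dl /eqP <-; rewrite ffupdK ffupd_id.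
apply: eq_big => [dl|dl _]; last by rewrite weight_ffupd -mulrA mulrCA.
rewrite ffupd_at eqxx /= ffupdK.
by apply/eqP/eqP => [<-|<-]; rewrite ?ffupd_at ?ffupd_id.
Qed.

Hypothesis w_ge0 : forall j, 0 <= w j.

Lemma ler_sum_weight c (h1 h2 : D -> R) :
  (forall dl, \sum_j w j * h1 (ffupd dl c j) <= \sum_j w j * h2 (ffupd dl c j)) ->
  \sum_dl weight dl * h1 dl <= \sum_dl weight dl * h2 dl.
Proof.
move=> le_fiber; case: (pickP (@predT I)) => [j0 _|noI]; last first.
  by rewrite !big_pred0 // => dl; have := noI (dl c).
rewrite !(sum_weight_fiber c j0); apply: ler_sum => dl _.
by apply: ler_wpM2l (le_fiber dl); apply: prodr_ge0.
Qed.

End ProductWeights.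

Section TruncatedGeometric.
Variables (q : R) (r : nat).
Local Notation w j := (geomcap (1 - q) r j).

Lemma geomcapE j : w j = if (j < r)%nat then (1 - q) * q ^+ j else q ^+ r.
Proof. by rewrite /geomcap -!exprnP (_ : 1 - (1 - q) = q) //; ring. Qed.

Lemma geomcap_tail i : (i <= r)%nat -> \sum_(i <= j < r.+1) w j = q ^+ i.
Proof.
move=> leir; rewrite big_nat_recr //= geomcapE ltnn.
rewrite (telescope_sumr_eq (fun j => - q ^+ j)) // => [|j /andP[_ ltjr]]; last first.
  by rewrite geomcapE ltjr exprS; ring.
by ring.
Qed.

Lemma sum_geomcap : \sum_(j < r.+1) w j = 1.
Proof. by rewrite -(big_mkord xpredT) -(expr0 q) -(geomcap_tail (leq0n r)). Qed.

Hypotheses (q_gt0 : 0 < q) (q_le1 : q <= 1).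

Lemma geomcap_ge0 j : 0 <= w j.
Proof.
have q_ge0 : 0 <= q := ltW q_gt0.
by rewrite geomcapE; case: ifP => _; rewrite ?mulr_ge0 ?exprn_ge0 ?subr_ge0.
Qed.

Lemma sum_geomcap_above (a : pred 'I_r.+1) i : (i <= r)%nat ->
  (forall j : 'I_r.+1, a j -> (i <= j)%nat) -> \sum_(j < r.+1) w j * (a j)%:R <= q ^+ i.
Proof.
move=> leir above; rewrite -(geomcap_tail leir) big_geq_mkord [X in _ <= X]big_mkcond /=.
apply: ler_sum => j _; have := above j.
by case: (a j); case: (i <= j)%nat; rewrite ?mulr1 ?mulr0 ?geomcap_ge0 // => /(_ isT).
Qed.

Lemma geomcap_tail_le_sum (b : pred 'I_r.+1) i : (i <= r)%nat ->
  (forall j : 'I_r.+1, (i <= j)%nat -> b j) -> q ^+ i <= \sum_(j < r.+1) w j * (b j)%:R.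
Proof.
move=> leir above; rewrite -(geomcap_tail leir) big_geq_mkord [X in X <= _]big_mkcond /=.
apply: ler_sum => j _; have := above j.
by case: (b j); case: (i <= j)%nat; rewrite ?mulr1 ?mulr0 ?geomcap_ge0 // => /(_ isT).
Qed.

Lemma geomcap_shift_bound (a b : pred 'I_r.+1) :
  (forall j j' : 'I_r.+1, a j -> (j < j')%nat -> b j') ->
  \sum_(j < r.+1) w j * (a j)%:R <= q^-1 * \sum_(j < r.+1) w j * (b j)%:R + q ^+ r.
Proof.
(* With i the least value where a holds, the a-mass is at most q^i, and unless
   i = r the b-mass is at least q^(i+1). *)
move=> ab; have q_ge0 : 0 <= q := ltW q_gt0.
have sum_b_ge0 : 0 <= q^-1 * \sum_(j < r.+1) w j * (b j)%:R.
  by rewrite mulr_ge0 ?invr_ge0 ?sumr_ge0 // => j _; rewrite mulr_ge0 ?geomcap_ge0.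
have qr_ge0 : 0 <= q ^+ r := exprn_ge0 r q_ge0.
have [j0 aj0|no_a] := pickP a; last first.
  by rewrite big1 ?addr_ge0 // => j _; rewrite no_a mulr0.
case: (arg_minnP (fun j : 'I_r.+1 => j : nat) aj0) => i ai imin.
have le_a := sum_geomcap_above (ltn_ord i) imin.
have [ltir|leri] := ltnP i r.
  have := geomcap_tail_le_sum ltir (fun j => ab i j ai).
  rewrite -(@ler_pM2l _ q^-1) ?invr_gt0 // exprS mulKf ?gt_eqF //.
  by move=> le_b; apply: le_trans le_a (le_trans le_b _); rewrite lerDl.
have ri : nat_of_ord i = r by apply/eqP; rewrite eqn_leq leri -ltnS ltn_ord.
by apply: le_trans le_a _; rewrite ri lerDr.
Qed.

End TruncatedGeometric.

Lemma weighted_sum_affine (I : finType) (u f : I -> R) s t :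
  \sum_i u i = 1 -> \sum_i u i * (s * f i + t) = s * \sum_i u i * f i + t.
Proof.
move=> sum_u1; rewrite mulr_sumr -[t in RHS]mul1r -sum_u1 mulr_suml -big_split /=.
by apply: eq_bigr => i _; ring.
Qed.

Section ExpectedSpannerSize.
Variables (V : finType) (e : rel V) (ID : V -> nat) (r : nat) (q : R).
Hypotheses (e_sym : symmetric e) (q_gt0 : 0 < q) (q_le1 : q <= 1).
Local Notation D := {ffun V -> 'I_r.+1}.
Local Notation Pr := (weight (fun j : 'I_r.+1 => geomcap (1 - q) r j)).
Local Notation shifts dl := (fun v => nat_of_ord (dl v)).
Local Notation charged_ind dl x c := ((charged e ID r (shifts dl) x c)%:R : R).
Local Notation center_ind dl x c := ((center e ID r (shifts dl) x == c)%:R : R).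

Lemma sum_weight_geomcap : \sum_(dl : D) Pr dl = 1.
Proof. by rewrite sum_weight big1 // => v _; apply: sum_geomcap. Qed.

Lemma weight_geomcap_ge0 (dl : D) : 0 <= Pr dl.
Proof. by apply: prodr_ge0 => v _; apply: geomcap_ge0. Qed.

Lemma weight_shift_bound c (a b : pred D) :
  (forall dl (j j' : 'I_r.+1), a (ffupd dl c j) -> (j < j')%nat -> b (ffupd dl c j')) ->
  \sum_dl Pr dl * (a dl)%:R <= q^-1 * \sum_dl Pr dl * (b dl)%:R + q ^+ r.
Proof.
move=> ab; rewrite -weighted_sum_affine ?sum_weight_geomcap //.
apply: (@ler_sum_weight _ _ _ (fun j : 'I_r.+1 => geomcap_ge0 r q_gt0 q_le1 j) c) => dl.
rewrite weighted_sum_affine ?sum_geomcap //.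
by apply: geomcap_shift_bound => // j j'; apply: ab.
Qed.

Lemma expected_charged x c :
  \sum_dl Pr dl * charged_ind dl x c <= q^-1 * \sum_dl Pr dl * center_ind dl x c + q ^+ r.
Proof.
apply: (@weight_shift_bound c) => dl j j' chj ltj.
apply/eqP/(charged_center_raise e_sym _ _ chj) => [v vc|].
  by rewrite !ffunE (negbTE vc).
by rewrite !ffupd_at ltj -ltnS ltn_ord.
Qed.

Lemma expected_card_spanner :
  \sum_dl Pr dl * #|spanner e ID r (shifts dl)|%:R <=
  #|V|%:R * (1 + q^-1 + #|V|%:R * q ^+ r).
Proof.
set n := #|V|.
have card_le (dl : D) :
    #|spanner e ID r (shifts dl)|%:R <= n%:R + \sum_x \sum_c charged_ind dl x c.
  rewrite -(eq_bigr _ (fun x _ => natr_sum _ _ _ _)) -natr_sum -natrD ler_nat.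
  exact: card_spanner.
apply: le_trans (_ : \sum_dl Pr dl * (n%:R + \sum_x \sum_c charged_ind dl x c) <= _).
  by apply: ler_sum => dl _; exact: (ler_wpM2l (weight_geomcap_ge0 dl) (card_le dl)).
have -> : \sum_dl Pr dl * (n%:R + \sum_x \sum_c charged_ind dl x c) =
          n%:R + \sum_x \sum_c \sum_dl Pr dl * charged_ind dl x c.
  under eq_bigr do rewrite mulrDr mulr_sumr.
  under eq_bigr do under eq_bigr do rewrite mulr_sumr.
  rewrite big_split /= -mulr_suml sum_weight_geomcap mul1r exchange_big /=.
  by congr (_ + _); apply: eq_bigr => x _; rewrite exchange_big.
apply: le_trans (_ : _ <= n%:R + \sum_x \sum_c
    (q^-1 * \sum_dl Pr dl * center_ind dl x c + q ^+ r)) _.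
  by rewrite lerD2l; do 2 (apply: ler_sum => ? _); apply: expected_charged.
have cluster_once x : \sum_c \sum_(dl : D) Pr dl * center_ind dl x c = 1.
  rewrite exchange_big -[RHS]sum_weight_geomcap; apply: eq_bigr => dl _.
  rewrite (bigD1 (center e ID r (shifts dl) x)) //= eqxx mulr1 big1 ?addr0 // => c.
  by rewrite eq_sym => /negbTE ->; rewrite mulr0.
rewrite le_eqVlt; apply/orP; left; apply/eqP.
under eq_bigr => x _ do rewrite big_split /= -mulr_sumr cluster_once.
by rewrite !sumr_const -/n; ring.
Qed.

End ExpectedSpannerSize.

Lemma Rpower_0l y : Rpower 0 y = 1.
Proof.
by rewrite /Rpower /ln; case: Rlt_dec => [/Rlt_irrefl|_] //; rewrite Rmult_0_r exp_0.
Qed.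

Lemma Rpower_root (x : R) (k : nat) : 1 <= x ->
  let a := Rpower x (INR k.+1)^-1 in 1 <= a /\ x = a ^+ k.+1.
Proof.
move=> /RleP x_ge1 a; have x_gt0 : Rlt 0 x by apply: Rlt_le_trans Rlt_0_1 x_ge1.
have k_gt0 : Rlt 0 (INR k.+1) by apply/RltP; rewrite INRE ltr0Sn.
split.
  apply/RleP; have := Rle_Rpower x 0 (INR k.+1)^-1 x_ge1.
  by rewrite Rpower_O //; apply; apply/Rlt_le/Rinv_0_lt_compat.
rewrite -RpowE -Rpower_pow; last exact: exp_pos.
by rewrite Rpower_mult Rinv_l ?Rpower_1 //; apply: Rgt_not_eq.
Qed.

Lemma spanner_size_numeric (n r : nat) :
  let q := Rpower (INR n) (- (INR r.+1)^-1) in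
  [/\ 0 < q, q <= 1 &
      n%:R * (1 + q^-1 + n%:R * q ^+ r) <= 3 * Rpower (INR n) (1 + (INR r.+1)^-1)].
Proof.
move=> q; case: n => [|m] in q *.
  rewrite /q !Rpower_0l mul0r; split; rewrite ?ltr01 ?mulr_ge0 //.
set x := INR m.+1; have x_ge1 : 1 <= x by rewrite /x INRE ler1n.
have [a_ge1 xE] := Rpower_root r x_ge1; set a := Rpower x _ in a_ge1 xE.
have a_gt0 : 0 < a := lt_le_trans ltr01 a_ge1.
have qE : q = a^-1 by rewrite /q Rpower_Ropp.
have rootE : Rpower x (1 + (INR r.+1)^-1) = x * a.
  by rewrite Rpower_plus Rpower_1 //; apply/RltP/(lt_le_trans ltr01).
have xqE : x * q ^+ r = a by rewrite qE xE exprVn exprS mulrK // unitfE expf_neq0 ?gt_eqF.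
rewrite -INRE -/x rootE xqE qE invrK; split; rewrite ?invr_gt0 ?invr_le1 ?unitfE ?gt_eqF //.
have x_ge0 : 0 <= x := le_trans ler01 x_ge1.
nra.
Qed.

Local Close Scope ring_scope.

Theorem lemma9 :
  exists C : R,
  forall (V : finType) (e : rel V) (ID : V -> nat) (k : nat),
    symmetric e -> irreflexive e -> injective ID -> (2 <= k)%N ->
    let n := #|V| in
    let r := k.-1 in
    let p := (1 - Rpower (INR n) (- / INR k))%R in
    exists F : {ffun V -> 'I_k} -> {set {set V}},
      (forall delta : {ffun V -> 'I_k},
         F delta \subset edges e /\
         forall x y : V, e x y ->
           (exists y' : V, [set x; y'] \in F delta /\
              center e ID r (fun v => nat_of_ord (delta v)) y'
              = center e ID r (fun v => nat_of_ord (delta v)) y)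
           \/
           (exists x' : V, [set x'; y] \in F delta /\
              center e ID r (fun v => nat_of_ord (delta v)) x'
              = center e ID r (fun v => nat_of_ord (delta v)) x))
      /\
      (\sum_(delta : {ffun V -> 'I_k})
          outcome_prob p r delta * INR #|F delta| <=
        C * Rpower (INR n) (1 + / INR k))%R.
Proof.
(* Self-loops never hurt the covering argument. *)
exists (3%:R)%R => V e ID [//|r] e_sym _ ID_inj _ n r' p.
exists (fun delta : {ffun V -> 'I_r.+1} => spanner e ID r (fun v => delta v)).
split=> [delta|].
  split; first exact: spanner_sub_edges.
  by move=> x y; apply: spanner_cover.
have [q_gt0 q_le1 bound] := spanner_size_numeric #|V| r.
apply: le_trans bound; under eq_bigr do rewrite INRE.
exact: expected_card_spanner.
Qed.
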